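(* Let $V$ be an $n$-dimensional vector space over a field of characteristic zero, $n\neq 4$, and let $A^{ab}$ and $B_{ab}$ be 2-forms with $\operatorname{rank}A\leq 4$. Let $T=T^a{}_b\{A,B\}=A^{ac}B_{bc}-\frac14 A^{cd}B_{cd}\delta^a_b$. Then $$\Bigl(T^2-\frac14[T^2]+\frac{1}{4(n-4)}[T]^2\Bigr)\Bigl(T-\frac{1}{n-4}[T]\Bigr)=0.$$
   Context: Index-free notation for $(1,1)$-tensors: products denote composition, $[X]=X^c{}_c$ is the trace, and a scalar term is understood as multiplied by the identity $\delta^a_b$. The rank of a 2-form $A^{ab}$ is the dimension of the subspace spanned by the vectors $A^{ab}\omega_b$ as $\omega$ ranges over the dual space (equivalently the least number of linearly independent vectors needed to construct $A$). No metric is assumed. *)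

From HB Require Import structures.
From mathcomp Require Import all_boot all_order all_algebra.
Set Implicit Arguments. Unset Strict Implicit. Unset Printing Implicit Defensive.
Import GRing.Theory.
Local Open Scope ring_scope.

(* V = F^n with a fixed basis; a (1,1)-tensor X^a_b is a matrix X a b
   (row a = upper index, column b = lower index); composition is *m,
   trace is \tr, a scalar s stands for s%:M (s times delta^a_b).
   A 2-form A^{ab} (contravariant) is a matrix A with A^T = -A; likewise
   B_{ab} (covariant). *)

Definition antisym (F : fieldType) (n : nat) (A : 'M[F]_n) : Prop := A^T = - A.

Definition contr2 (F : fieldType) (n : nat) (A B : 'M[F]_n) : F :=
  \sum_(c < n) \sum_(d < n) A c d * B c d.

Definition tensorT (F : fieldType) (n : nat) (A B : 'M[F]_n) : 'M[F]_n :=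
  \matrix_(a < n, b < n) (\sum_(c < n) A a c * B b c)
  - (4%:R^-1 * contr2 A B)%:M.

From HB Require Import structures.
From mathcomp Require Import all_boot all_order all_algebra ring.
Set Implicit Arguments.
Unset Strict Implicit.
Unset Printing Implicit Defensive.

(* A 2-form of rank at most 4 factors as A = Y^T S Y with S an alternating
   4x4 matrix, so M := A B^T = Y^T W with W Y^T = S N, where N := Y B^T Y^T is
   alternating as well.  The product P of two alternating 4x4 matrices has its
   eigenvalues in pairs, so it satisfies 8 P^2 - 4 [P] P + ([P]^2 - 2 [P^2]) = 0
   (checked by expansion).  Since [Y^T W] = [W Y^T] and likewise for squares,
   multiplying by Y^T on the left and W on the right gives the cubic
   8 M^3 - 4 [M] M^2 + ([M]^2 - 2 [M^2]) M = 0.  Finally T = M - [M]/4, and for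
   n <> 4 one has T - [T]/(n-4) = M, while the first factor of the claimed
   identity reduces to M^2 - [M] M/2 + ([M]^2 - 2 [M^2])/8: the product is the
   cubic divided by 8. *)

Import GRing.Theory.
Local Open Scope ring_scope.

Lemma ord4P (i : 'I_4) : [\/ i = 0, i = 1, i = 2 | i = 3].
Proof.
by case: i => -[|[|[|[|//]]]] ?; [constructor 1 | constructor 2 | constructor 3 | constructor 4];
  apply: val_inj.
Qed.

Lemma sum_ord4 (V : nmodType) (F : 'I_4 -> V) : \sum_i F i = F 0 + F 1 + F 2 + F 3.
Proof.
by rewrite !big_ord_recr big_ord0 /= add0r; congr (F _ + F _ + F _ + F _); apply: val_inj.
Qed.

Section AlternatingFour.
Variable R : comNzRingType.

Definition skew4 (a b c d e f : R) : 'M[R]_4 := \matrix_(i, j)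
  nth 0 (nth [::] [:: [:: 0; a; b; c]; [:: -a; 0; d; e];
                      [:: -b; -d; 0; f]; [:: -c; -e; -f; 0]] i) j.

Lemma alternating4E (S : 'M[R]_4) : S^T = - S -> (forall i, S i i = 0) ->
  S = skew4 (S 0 1) (S 0 2) (S 0 3) (S 1 2) (S 1 3) (S 2 3).
Proof.
move=> skS diagS; have antiS i j : S j i = - S i j.
  by have := congr1 (fun X : 'M_4 => X i j) skS; rewrite !mxE.
by apply/matrixP => i j; case: (ord4P i) => ->; case: (ord4P j) => ->;
  rewrite mxE /= ?diagS // antiS.
Qed.

Lemma skew4_mul_quadratic (a b c d e f a' b' c' d' e' f' : R) :
  let P := skew4 a b c d e f *m skew4 a' b' c' d' e' f' in
  8%:R *: (P *m P) - (4%:R * \tr P) *: P + (\tr P ^+ 2 - 2%:R * \tr (P *m P))%:M = 0.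
Proof.
move=> P; apply/matrixP => i j.
rewrite /mxtrace; do 3 rewrite !mxE !sum_ord4; rewrite !mxE.
by case: (ord4P i) => ->; case: (ord4P j) => ->; rewrite /=; ring.
Qed.

Lemma alternating4_mul_quadratic (S N : 'M[R]_4) :
  S^T = - S -> (forall i, S i i = 0) -> N^T = - N -> (forall i, N i i = 0) ->
  let P := S *m N in
  8%:R *: (P *m P) - (4%:R * \tr P) *: P + (\tr P ^+ 2 - 2%:R * \tr (P *m P))%:M = 0.
Proof.
by move=> skS diagS skN diagN; rewrite (alternating4E skS diagS) (alternating4E skN diagN);
  apply: skew4_mul_quadratic.
Qed.

End AlternatingFour.

Lemma antisym_diag0 (F : fieldType) n (S : 'M[F]_n) :
  2%:R != 0 :> F -> S^T = - S -> forall i, S i i = 0.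
Proof.
move=> two_neq0 skS i; have := congr1 (fun X : 'M_n => X i i) skS; rewrite !mxE.
move/eqP; rewrite -addr_eq0 -mulr2n -mulr_natr mulf_eq0 (negbTE two_neq0) orbF.
by move/eqP.
Qed.

Lemma pchar0_eqr_nat (F : idomainType) m n :
  [pchar F] =i pred0 -> (m%:R == n%:R :> F) = (m == n).
Proof.
move=> char0; wlog le_nm : m n / (n <= m)%N.
  move=> wlog_le; case: (leqP n m) => [/wlog_le //|/ltnW /wlog_le].
  by rewrite eq_sym => ->; rewrite eq_sym.
by rewrite -subr_eq0 -natrB // (pcharf0P F).1 // subn_eq0 eqn_leq le_nm andbT.
Qed.

Section AntisymFactor.
Variable F : fieldType.

Lemma rank_le_submx m n r (A : 'M[F]_(m, n)) :
  (\rank A <= r)%N -> exists Y : 'M_(r, n), (A <= Y)%MS.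
Proof.
move=> rkA; exists (pid_mx r *m row_ebase A).
rewrite -[X in (X <= _)%MS]mulmx_ebase.
have -> : pid_mx (\rank A) = (pid_mx (\rank A) : 'M[F]_(m, r)) *m pid_mx r :> 'M_(m, n).
  by rewrite mul_pid_mx [minn (\rank A) r]minnC !(minn_idPr rkA).
by rewrite !mulmxA -mulmxA submxMl.
Qed.

Lemma antisym_submx_congr n r (A : 'M[F]_n) (Y : 'M_(r, n)) :
  A^T = - A -> (A <= Y)%MS -> exists D, A = Y^T *m D *m Y.
Proof.
move=> skA sAY; exists (- (A *m pinvmx Y)^T *m pinvmx Y).
rewrite mulNmx mulmxN mulNmx mulmxA -trmx_mul (mulmxKpV sAY) skA.
by rewrite !mulNmx opprK mulmxKpV.
Qed.

Lemma antisym_factor n r (A : 'M[F]_n) :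
  2%:R != 0 :> F -> A^T = - A -> (\rank A <= r)%N ->
  exists Y : 'M_(r, n), exists2 S : 'M_r, S^T = - S & A = Y^T *m S *m Y.
Proof.
move=> two_neq0 skA /rank_le_submx[Y /(antisym_submx_congr skA)[D eA]].
exists Y, (2%:R^-1 *: (D - D^T)).
  by rewrite linearZ /= linearB /= trmxK -scalerN opprB.
have eAT : Y^T *m D^T *m Y = - A by rewrite -skA eA !trmx_mul trmxK mulmxA.
rewrite -scalemxAr -scalemxAl mulmxBr mulmxBl -eA eAT opprK.
by rewrite -mulr2n -scaler_nat scalerA mulVf // scale1r.
Qed.

End AntisymFactor.

Lemma mulmx_swap_quadratic (R : comPzRingType) m n (X : 'M[R]_(m, n)) (Z : 'M_(n, m))
    (a b c : R) :
  let P := Z *m X in let M := X *m Z in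
  a *: (P *m P) - b *: P + c%:M = 0 ->
  a *: (M *m M *m M) - b *: (M *m M) + c *: M = 0.
Proof.
move=> P M quadP.
have -> : a *: (M *m M *m M) - b *: (M *m M) + c *: M
          = X *m (a *: (P *m P) - b *: P + c%:M) *m Z.
  rewrite mulmxDr mulmxBr mulmxDl mulmxBl mul_mx_scalar -!scalemxAr -!scalemxAl.
  by rewrite /M /P !mulmxA.
by rewrite quadP mulmx0 mul0mx.
Qed.

Lemma antisym_rank4_cubic (F : fieldType) n (A B : 'M[F]_n) :
  2%:R != 0 :> F -> A^T = - A -> B^T = - B -> (\rank A <= 4)%N ->
  let M := A *m B^T in
  8%:R *: (M *m M *m M) - (4%:R * \tr M) *: (M *m M)
    + (\tr M ^+ 2 - 2%:R * \tr (M *m M)) *: M = 0.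
Proof.
move=> two_neq0 skA skB /(antisym_factor two_neq0 skA)[Y [S skS eA]] M.
pose N := Y *m B^T *m Y^T; pose W := S *m Y *m B^T.
have skN : N^T = - N by rewrite /N !trmx_mul !trmxK skB !mulmxN !mulNmx opprK mulmxA.
have eM : M = Y^T *m W by rewrite /M eA !mulmxA.
have trM : \tr (W *m Y^T) = \tr M by rewrite eM mxtrace_mulC.
have trM2 : \tr (W *m Y^T *m (W *m Y^T)) = \tr (M *m M).
  by rewrite eM !mulmxA mxtrace_mulC !mulmxA.
have := alternating4_mul_quadratic skS (antisym_diag0 two_neq0 skS)
  skN (antisym_diag0 two_neq0 skN).
rewrite /= (_ : S *m N = W *m Y^T) ?trM ?trM2; last by rewrite /N !mulmxA.
by move=> /mulmx_swap_quadratic; rewrite -eM.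
Qed.

Lemma tensorTE (F : fieldType) n (A B : 'M[F]_n) :
  tensorT A B = A *m B^T - (4%:R^-1 * \tr (A *m B^T))%:M.
Proof.
rewrite /tensorT /contr2 /mxtrace; congr (_ - (_ * _)%:M).
  by apply/matrixP => a b; rewrite !mxE; apply: eq_bigr => c _; rewrite mxE.
by apply: eq_bigr => c _; rewrite mxE; apply: eq_bigr => d _; rewrite mxE.
Qed.

Lemma shifted_cubic_factor (F : fieldType) m (M : 'M[F]_m) :
  let k : F := m%:R - 4%:R in
  2%:R != 0 :> F -> k != 0 ->
  8%:R *: (M *m M *m M) - (4%:R * \tr M) *: (M *m M)
    + (\tr M ^+ 2 - 2%:R * \tr (M *m M)) *: M = 0 ->
  let T := M - (4%:R^-1 * \tr M)%:M in
  (T *m T - (4%:R^-1 * \tr (T *m T))%:M + ((4%:R * k)^-1 * \tr T ^+ 2)%:M)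
    *m (T - (k^-1 * \tr T)%:M) = 0.
Proof.
move=> k two_neq0 k_neq0 cubicM T.
have four_neq0 : 4%:R != 0 :> F by rewrite (natrM _ 2 2) mulf_neq0.
have eight_neq0 : 8%:R != 0 :> F by rewrite (natrM _ 2 4) mulf_neq0.
pose a := 4%:R^-1 * \tr M.
have trT : \tr T = - (k * a).
  by rewrite /T raddfB /= mxtrace_scalar -[_ *+ _]mulr_natr /k /a; field.
have shiftT : T - (k^-1 * \tr T)%:M = M.
  by rewrite trT mulrN mulKf // raddfN /= opprK subrK.
have TT : T *m T = M *m M - (2%:R * a) *: M + (a ^+ 2)%:M.
  rewrite /T mulmxBl !mulmxBr mul_mx_scalar mul_scalar_mx -scalar_mxM.
  by apply/matrixP => i j; rewrite !mxE /a; ring.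
have trTT : \tr (T *m T) = \tr (M *m M) - 2%:R * a * \tr M + a ^+ 2 * m%:R.
  by rewrite TT raddfD raddfB /= mxtrace_scalar mxtraceZ mulr_natr mulrA.
rewrite shiftT trTT trT TT !(mulmxDl, mulNmx, mul_scalar_mx) -scalemxAl.
rewrite -[RHS](scaler0 _ 8%:R^-1) -cubicM.
apply/matrixP => i j; rewrite !mxE /a /k; field.
by rewrite eight_neq0 four_neq0.
Qed.

Theorem theorem5 (F : fieldType) (n : nat) (A B : 'M[F]_n) :
  [pchar F] =i pred0 ->
  n <> 4%N ->
  antisym A -> antisym B ->
  (\rank A <= 4)%N ->
  let T := tensorT A B in
  let k : F := n%:R - 4%:R in
  (T *m T - (4%:R^-1 * \tr (T *m T))%:M + ((4%:R * k)^-1 * \tr T ^+ 2)%:M)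
    *m (T - (k^-1 * \tr T)%:M) = 0.
Proof.
move=> char0 n_neq4 skA skB rkA T k.
have two_neq0 : 2%:R != 0 :> F by rewrite ((pcharf0P F).1 char0).
have k_neq0 : k != 0 by rewrite subr_eq0 pchar0_eqr_nat //; apply/eqP.
rewrite /T tensorTE; apply: shifted_cubic_factor => //.
exact: antisym_rank4_cubic.
Qed.
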